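(* Let $\Omega=\{(x-a_1)^{r_1},\dots,(x-a_n)^{r_n}\}$ and $\Psi=\{(x-b_1)^{s_1},\dots,(x-b_m)^{s_m}\}$ be P-independent subsets of $\mathbb{F}[x;\sigma,\delta]$ of sizes $n,m\in\mathbb{Z}_+$ respectively, where $a_i,b_j\in\mathbb{F}$ and $r_i,s_j\in\mathbb{Z}_+$. If no element of $\{a_1,\dots,a_n\}$ is $(\sigma,\delta)$-conjugate to an element of $\{b_1,\dots,b_m\}$, then $\Omega\cup\Psi$ has size $n+m$ and is P-independent.
   Context: Let $\mathbb{F}$ be a division ring, $\sigma$ a ring endomorphism of $\mathbb{F}$ and $\delta$ a $\sigma$-derivation; $\mathbb{F}[x;\sigma,\delta]$ is the skew polynomial ring with $xa=\sigma(a)x+\delta(a)$. Elements $a,b\in\mathbb{F}$ are $(\sigma,\delta)$-conjugate if $b=a^\beta:=\sigma(\beta)a\beta^{-1}+\delta(\beta)\beta^{-1}$ for some $\beta\in\mathbb{F}^*$. For a set $\Omega$ of skew polynomials, $I(\Omega)$ is the left ideal of skew polynomials right-divisible by every element of $\Omega$ and $F_\Omega$ its monic generator of minimal degree (or $0$). $\Omega$ is P-independent if it is finite, $I(\Omega)\ne\{0\}$ and $\deg F_\Omega=\sum_{P\in\Omega}\deg P$. *)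

From HB Require Import structures.
From mathcomp Require Import all_boot all_order all_algebra.
Set Implicit Arguments. Unset Strict Implicit. Unset Printing Implicit Defensive.
Import GRing.Theory.
Local Open Scope ring_scope.

Definition division_ring (F : unitRingType) : Prop :=
  forall a : F, a != 0 -> a \is a GRing.unit.

(* delta is a sigma-derivation: additive and delta(ab) = sigma(a) delta(b) + delta(a) b
   (forced by x a = sigma(a) x + delta(a)). *)
Definition sigma_derivation (F : unitRingType) (sigma delta : F -> F) : Prop :=
  (forall a b, delta (a + b) = delta a + delta b) /\
  (forall a b, delta (a * b) = sigma a * delta b + delta a * b).

Section Skew.
Variables (F : unitRingType) (sigma delta : F -> F).

(* Elements of F[x;sigma,delta] are represented by their coefficient lists
   ({poly F}, with p = \sum_i p`_i x^i, coefficients on the left).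
   Addition is that of {poly F}; multiplication is the skew one below. *)

(* left multiplication by x: x * (c x^k) = sigma(c) x^(k+1) + delta(c) x^k *)
Definition skX (p : {poly F}) : {poly F} :=
  map_poly sigma p * 'X + map_poly delta p.

(* skew product: (\sum_i p_i x^i) * q = \sum_i p_i (x^i q) *)
Definition skmul (p q : {poly F}) : {poly F} :=
  \sum_(i < size p) p`_i *: iter i skX q.

Definition skexp (p : {poly F}) (r : nat) : {poly F} :=
  iter r (fun q => skmul q p) 1.

Definition rdivides (g f : {poly F}) : Prop := exists h, f = skmul h g.

Definition inI (Om : seq {poly F}) (f : {poly F}) : Prop :=
  forall P, P \in Om -> rdivides P f.

Definition is_F_Omega (Om : seq {poly F}) (Fm : {poly F}) : Prop :=
  [/\ Fm \is monic, inI Om Fm &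
      forall f, inI Om f -> f != 0 -> (size Fm <= size f)%N].

Definition P_independent (Om : seq {poly F}) : Prop :=
  (exists f, inI Om f /\ f != 0) /\
  exists Fm, is_F_Omega Om Fm /\
    (size Fm).-1 = (\sum_(P <- undup Om) (size P).-1)%N.

Definition sd_conjugate (a b : F) : Prop :=
  exists beta : F, beta != 0 /\
    b = sigma beta * a * beta^-1 + delta beta * beta^-1.

End Skew.

From Pilot Require Import Defs.
From mathcomp Require Import all_boot all_order all_algebra.
From mathcomp Require Import zify.
Set Implicit Arguments. Unset Strict Implicit.
Import GRing.Theory.
Local Open Scope ring_scope.

(* The swap
     identity (x - c^(c-d)) (x - d) = (x - d^(c-d)) (x - c) lets a linear factor
     be moved past another one, staying inside the conjugacy classes.
   - If S and T are disjoint unions of conjugacy classes, a nonzero common left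
     multiple of a product of |cs| S-factors and of |ds| T-factors has degree
     at least |cs| + |ds|; transporting this to right divisors f, g of such
     products, every nonzero common left multiple of f and g has degree at
     least deg f + deg g.
   - F_Om divides a product of S-linear factors (a common left multiple of all
     elements of Om that is again such a product), and likewise F_Psi, so a
     common left multiple of F_Om and F_Psi of minimal degree, normalized, is
     F_(Om ++ Psi) of degree deg F_Om + deg F_Psi. *)

Section SkewPolynomials.
Variables (F : unitRingType) (sigma : {rmorphism F -> F}) (delta : F -> F).
Hypothesis divF : division_ring F.
Hypothesis sdF : sigma_derivation sigma delta.

Implicit Types (p q w f g h u v A H Z : {poly F}) (c d : F) (cs ds csA csB : seq F).
Local Notation skX := (skX sigma delta).
Local Notation "p ** q" := (skmul sigma delta p q) (at level 40, left associativity).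
Local Notation rdivides := (rdivides sigma delta).
Local Notation inI := (inI sigma delta).

Lemma deltaD c d : delta (c + d) = delta c + delta d.
Proof. by case: sdF. Qed.

Lemma deltaM c d : delta (c * d) = sigma c * delta d + delta c * d.
Proof. by case: sdF. Qed.

Lemma delta0 : delta 0 = 0.
Proof. by apply/eqP; rewrite -(inj_eq (addrI (delta 0))) addr0 -deltaD addr0. Qed.

Lemma deltaN c : delta (- c) = - delta c.
Proof. by apply/eqP; rewrite -subr_eq0 opprK -deltaD addNr delta0. Qed.

Lemma deltaB c d : delta (c - d) = delta c - delta d.
Proof. by rewrite deltaD deltaN. Qed.

Lemma delta1 : delta 1 = 0.
Proof.
have h := deltaM 1 1; rewrite !mulr1 rmorph1 mul1r in h.
by apply: (addrI (delta 1)); rewrite -h addr0.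
Qed.

Lemma unitE c : (c \is a GRing.unit) = (c != 0).
Proof.
apply/idP/idP; last exact: divF.
by apply: contraTneq => ->; rewrite unitr0.
Qed.

Lemma mul_neq0 {c d} : c != 0 -> d != 0 -> c * d != 0.
Proof. by rewrite -!unitE => hc hd; rewrite unitrMl. Qed.

Lemma iter_sigma_neq0 k c : c != 0 -> iter k sigma c != 0.
Proof. by move=> h; elim: k => //= k; rewrite -!unitE; apply: rmorph_unit. Qed.

Lemma size_eqS p k : p`_k != 0 -> (forall j, (k < j)%N -> p`_j = 0) -> size p = k.+1.
Proof.
move=> nz hj; apply/eqP; rewrite eqn_leq; apply/andP; split.
  by apply/leq_sizeP => j; apply: hj.
by rewrite ltnNge; apply/negP => /(nth_default 0) h; rewrite h eqxx in nz.
Qed.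

Lemma coef_skX p i : (skX p)`_i = (if i == 0%N then 0 else sigma p`_i.-1) + delta p`_i.
Proof.
rewrite /Defs.skX coefD coefMX (coef_map_id0 _ _ delta0).
by case: i => [|i] /=; rewrite ?coef_map.
Qed.

Lemma skXD p q : skX (p + q) = skX p + skX q.
Proof.
apply/polyP => i; rewrite coefD !coef_skX !coefD deltaD.
by case: (i == 0%N); rewrite ?addr0 ?rmorphD; [rewrite ?add0r | rewrite addrACA].
Qed.

Lemma skX0 : skX 0 = 0.
Proof. by apply/polyP => i; rewrite coef_skX !coef0 delta0 rmorph0 addr0; case: (_ == _). Qed.

Lemma skXZ c p : skX (c *: p) = sigma c *: skX p + delta c *: p.
Proof.
apply/polyP => i; rewrite coef_skX [RHS]coefD !coefZ coef_skX deltaM mulrDr.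
by case: ifP => _; rewrite ?mulr0 ?add0r ?rmorphM ?addrA.
Qed.

Lemma skX_sum I (s : seq I) (P : pred I) (G : I -> {poly F}) :
  skX (\sum_(i <- s | P i) G i) = \sum_(i <- s | P i) skX (G i).
Proof. exact: (big_morph skX skXD skX0). Qed.

Lemma iter_skXD k p q : iter k skX (p + q) = iter k skX p + iter k skX q.
Proof. by elim: k => //= k ->; rewrite skXD. Qed.

Lemma iter_skX0 k : iter k skX 0 = 0.
Proof. by elim: k => //= k ->; rewrite skX0. Qed.

Lemma skXXn k : skX ('X^k : {poly F}) = 'X^(k.+1).
Proof.
rewrite /Defs.skX map_polyXn exprSr [map_poly delta _](_ : _ = 0) ?addr0 //.
apply/polyP => i; rewrite (coef_map_id0 _ _ delta0) coefXn coef0.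
by case: (_ == _); rewrite ?delta1 ?delta0.
Qed.

Lemma skmulE {N p} q : (forall i, (N <= i)%N -> p`_i = 0) ->
  p ** q = \sum_(i < N) p`_i *: iter i skX q.
Proof.
move=> hN; have hs : (size p <= N)%N by apply/leq_sizeP.
rewrite /skmul (big_ord_widen N (fun i => p`_i *: iter i skX q) hs) big_mkcond /=.
apply: eq_bigr => i _; case: ifP => // /negbT; rewrite -leqNgt => h.
by rewrite nth_default // scale0r.
Qed.

Lemma skmulDl p1 p2 q : (p1 + p2) ** q = p1 ** q + p2 ** q.
Proof.
set N := maxn (size p1) (size p2).
have h1 i : (N <= i)%N -> p1`_i = 0.
  by move=> h; apply: nth_default; apply: leq_trans h; apply: leq_maxl.
have h2 i : (N <= i)%N -> p2`_i = 0.
  by move=> h; apply: nth_default; apply: leq_trans h; apply: leq_maxr.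
rewrite (skmulE _ h1) (skmulE _ h2) (@skmulE N _ q); last first.
  by move=> i hi; rewrite coefD h1 ?h2 ?addr0.
by rewrite -big_split; apply: eq_bigr => i _; rewrite coefD scalerDl.
Qed.

Lemma skmul0l q : 0 ** q = 0.
Proof. by rewrite /skmul size_poly0 big_ord0. Qed.

Lemma skmulBl p1 p2 q : (p1 - p2) ** q = p1 ** q - p2 ** q.
Proof.
suff skmulNl : (- p2) ** q = - (p2 ** q) by rewrite skmulDl skmulNl.
by apply/eqP; rewrite -subr_eq0 opprK -skmulDl addNr skmul0l.
Qed.

Lemma skmulZl c p q : (c *: p) ** q = c *: (p ** q).
Proof.
have h i : (size p <= i)%N -> p`_i = 0 by move=> hi; apply: nth_default.
rewrite (skmulE _ h) (@skmulE (size p) _ q); last by move=> i hi; rewrite coefZ h ?mulr0.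
by rewrite scaler_sumr; apply: eq_bigr => i _; rewrite coefZ scalerA.
Qed.

Lemma skmul_suml I (s : seq I) (P : pred I) (G : I -> {poly F}) q :
  (\sum_(i <- s | P i) G i) ** q = \sum_(i <- s | P i) (G i ** q).
Proof. exact: (big_morph (fun p => p ** q) (fun p1 p2 => skmulDl p1 p2 q) (skmul0l q)). Qed.

Lemma skmulDr p q1 q2 : p ** (q1 + q2) = p ** q1 + p ** q2.
Proof. by rewrite /skmul -big_split; apply: eq_bigr => i _; rewrite iter_skXD scalerDr. Qed.

Lemma skmul0r p : p ** 0 = 0.
Proof. by rewrite /skmul big1 // => i _; rewrite iter_skX0 scaler0. Qed.

Lemma skmulXn k q : 'X^k ** q = iter k skX q.
Proof.
rewrite (@skmulE k.+1 _ q); last first.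
  by move=> i hi; rewrite coefXn; case: eqP => // ?; subst; rewrite ltnn in hi.
rewrite big_ord_recr /= big1 ?add0r; first by rewrite coefXn eqxx scale1r.
by move=> i _; rewrite coefXn (ltn_eqF (ltn_ord i)) scale0r.
Qed.

Lemma skmul1l q : 1 ** q = q.
Proof. by rewrite -(expr0 'X) skmulXn. Qed.

Lemma skmulCl c q : c%:P ** q = c *: q.
Proof. by rewrite -alg_polyC skmulZl skmul1l. Qed.

Lemma skmul1r p : p ** 1 = p.
Proof.
rewrite /skmul -[in RHS](coefK p) poly_def; apply: eq_bigr => i _.
by congr (_ *: _); elim: (nat_of_ord i) => // k /= ->; rewrite skXXn.
Qed.

(* Associativity reduces to x (p q) = (x p) q, i.e. to the sigma-derivation rule. *)
Lemma skX_skmul p q : skX (p ** q) = skX p ** q.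
Proof.
rewrite {1}/skmul skX_sum [skX p]/Defs.skX skmulDl.
have hd i : (size p <= i)%N -> (map_poly delta p)`_i = 0.
  by move=> hi; rewrite (coef_map_id0 _ _ delta0) nth_default ?delta0.
have hs i : ((size p).+1 <= i)%N -> (map_poly sigma p * 'X)`_i = 0.
  by move=> hi; rewrite coefMX; case: i hi => //= i hi; rewrite coef_map nth_default ?raddf0.
rewrite (skmulE q hd) (skmulE q hs) big_ord_recl /= coefMX eqxx scale0r add0r -big_split /=.
apply: eq_bigr => i _; rewrite coefMX (coef_map_id0 _ _ delta0) /= coef_map.
by rewrite skXZ.
Qed.

Lemma skmulA p q w : p ** q ** w = p ** (q ** w).
Proof.
have iter_skX_skmul k : iter k skX (q ** w) = iter k skX q ** w.
  by elim: k => //= k ->; rewrite skX_skmul.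
rewrite [p ** q]/skmul skmul_suml [in RHS]/skmul; apply: eq_bigr => i _.
by rewrite skmulZl iter_skX_skmul.
Qed.

Lemma iter_skX_size k {p} : p != 0 ->
  size (iter k skX p) = (size p + k)%N /\
  lead_coef (iter k skX p) = iter k sigma (lead_coef p).
Proof.
move=> pn0; elim: k => [|k [ih1 ih2]]; first by rewrite addn0.
have qn0 : iter k skX p != 0 by rewrite -size_poly_gt0 ih1 addn_gt0 size_poly_gt0 pn0.
set q := iter k skX p in ih1 ih2 qn0 *; have sq := polySpred qn0.
have top : (skX q)`_(size q) = sigma (lead_coef q).
  by rewrite coef_skX /= [q`_(size q)]nth_default // delta0 addr0 sq lead_coefE.
have hs : size (skX q) = (size q).+1.
  apply: size_eqS; first by rewrite top; apply: (iter_sigma_neq0 1); rewrite lead_coef_eq0.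
  move=> j hj; rewrite coef_skX; case: j hj => // j hj /=.
  by rewrite !nth_default ?raddf0 ?delta0 ?addr0 // ltnW.
by rewrite /= lead_coefE hs /= top ih1 ih2 addnS.
Qed.

(* Degrees add: the top coefficient of p q is lead(p) sigma^(deg p)(lead q) != 0. *)
Lemma size_skmul {p q} : p != 0 -> q != 0 -> size (p ** q) = (size p + size q).-1.
Proof.
move=> pn0 qn0; have sp := polySpred pn0; have sq := polySpred qn0.
set k := (size p).-1 in sp *; set l := (size q).-1 in sq.
have [hi1 hi2] := iter_skX_size k qn0.
have E : p ** q = \sum_(i < k) p`_i *: iter i skX q + p`_k *: iter k skX q.
  by rewrite /skmul sp big_ord_recr.
have small j : (l + k <= j)%N -> (\sum_(i < k) p`_i *: iter i skX q)`_j = 0.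
  move=> hj; rewrite coef_sum big1 // => i _; rewrite coefZ.
  have [s1 _] := iter_skX_size i qn0.
  rewrite (@nth_default _ 0 (iter i skX q) j) ?mulr0 // s1 sq addSn; apply: leq_trans hj.
  by rewrite -addnS leq_add2l.
have top : (p ** q)`_(l + k) = lead_coef p * iter k sigma (lead_coef q).
  rewrite E coefD small // add0r coefZ lead_coefE -/k.
  by rewrite -hi2 [lead_coef (iter _ _ _)]lead_coefE hi1 sq addSn.
have hs : size (p ** q) = (l + k).+1.
  apply: size_eqS.
    by rewrite top mul_neq0 ?iter_sigma_neq0 // lead_coef_eq0.
  move=> j hj; rewrite E coefD (small _ (ltnW hj)) add0r coefZ.
  by rewrite (@nth_default _ 0 (iter k skX q) j) ?mulr0 // hi1 sq addSn.
by rewrite hs sp sq addSn addnS /= addnC.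
Qed.

Lemma skmul_sizeD {p q} : p != 0 -> q != 0 -> (size (p ** q)).+1 = (size p + size q)%N.
Proof.
move=> pn0 qn0; rewrite size_skmul //.
by rewrite prednK // addn_gt0 size_poly_gt0 pn0.
Qed.

Lemma skmul_neq0 {p q} : p != 0 -> q != 0 -> p ** q != 0.
Proof.
move=> pn0 qn0; have := skmul_sizeD pn0 qn0; rewrite -size_poly_gt0.
have : (0 < size p)%N by rewrite size_poly_gt0.
have : (0 < size q)%N by rewrite size_poly_gt0.
lia.
Qed.

Lemma skmul_eq0 p {q} : q != 0 -> (p ** q == 0) = (p == 0).
Proof.
move=> qn0; case: (eqVneq p 0) => [->|pn0]; first by rewrite skmul0l eqxx.
by rewrite (negbTE (skmul_neq0 pn0 qn0)).
Qed.

Lemma skdiv {g} p : g != 0 -> exists q r, p = q ** g + r /\ (size r < size g)%N.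
Proof.
move=> gn0; elim: {p}(size p) {-2}p (leqnn (size p)) => [|N IH] p hp.
  by exists 0, p; rewrite skmul0l add0r; move: hp; rewrite leqn0 => /eqP ->; rewrite size_poly_gt0.
case: (ltnP (size p) (size g)) => hpg; first by exists 0, p; rewrite skmul0l add0r.
have pn0 : p != 0 by rewrite -size_poly_gt0 (leq_trans _ hpg) ?size_poly_gt0.
set k := (size p - size g)%N; set T := iter k skX g.
have [sT lT] := iter_skX_size k gn0; rewrite subnKC // -/T in sT.
have lTn0 : lead_coef T != 0 by rewrite lT iter_sigma_neq0 // lead_coef_eq0.
(* subtracting c x^k g kills the leading term of p *)
set c := lead_coef p / lead_coef T.
have hlow : (size (p - c *: T)%R <= (size p).-1)%N.
  apply/leq_sizeP => j hj; rewrite coefB coefZ.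
  case: (ltngtP j (size p).-1) => hj'.
  - by move: hj; rewrite leqNgt hj'.
  - by rewrite !nth_default ?mulr0 ?subr0 // ?sT; rewrite (polySpred pn0).
  - by rewrite hj' -{2}sT -lead_coefE divrK ?unitE // lead_coefE subrr.
have hN : (size (p - c *: T)%R <= N)%N.
  by apply: leq_trans hlow _; move: hp; case: (size p).
have [q [r [e hr]]] := IH _ hN.
exists (q + c *: 'X^k), r; split => //.
by rewrite skmulDl -addrA [_ ** g + r]addrC addrA -e skmulZl skmulXn subrK.
Qed.

Lemma skOre {x y} : x != 0 -> y != 0 ->
  exists m1 m2, [/\ m1 != 0, m1 ** x = m2 ** y & (size m1 <= size y)%N].
Proof.
elim: {y}(size y) {-2}y (leqnn (size y)) x => [|N IH] y hy x xn0 yn0.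
  by move: hy; rewrite leqn0 size_poly_eq0 (negbTE yn0).
have [q [r [e hr]]] := skdiv x yn0.
case: (eqVneq r 0) => [r0|rn0].
  exists 1, q; split; rewrite ?oner_neq0 ?skmul1l ?e ?r0 ?addr0 //.
  by rewrite size_poly1 size_poly_gt0.
have [m1 [m2 [m1n0 em hm]]] := IH r (leq_trans hr hy) y yn0 rn0.
have m2n0 : m2 != 0.
  by apply: contraNneq m1n0 => m20; rewrite -(skmul_eq0 _ yn0) em m20 skmul0l eqxx.
exists m2, (m2 ** q + m1); split => //; first by rewrite e skmulDr skmulDl skmulA em.
have h1 := skmul_sizeD m1n0 yn0; have h2 := skmul_sizeD m2n0 rn0.
rewrite em in h1; lia.
Qed.

Lemma skOre_rdivides {f A H u} : A != 0 -> rdivides f A -> H = u ** f -> H != 0 ->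
  exists m w, [/\ m != 0, m ** A = w ** H & (size m <= size u)%N].
Proof.
move=> An0 [al eA] eH Hn0.
have aln0 : al != 0 by apply: contraNneq An0 => al0; rewrite eA al0 skmul0l.
have un0 : u != 0 by apply: contraNneq Hn0 => u0; rewrite eH u0 skmul0l.
have [m [w [mn0 em hm]]] := skOre aln0 un0.
by exists m, w; split; rewrite // eA eH -!skmulA em.
Qed.

Lemma inI_skmull Om w h : inI Om h -> inI Om (w ** h).
Proof. by move=> hI P /hI [h' ->]; exists (w ** h'); rewrite skmulA. Qed.

Lemma inI_cat Om Psi h : inI (Om ++ Psi) h <-> inI Om h /\ inI Psi h.
Proof.
split=> [hI|[hO hP] P]; last by rewrite mem_cat => /orP [/hO|/hP].
by split=> P hP; apply: hI; rewrite mem_cat hP ?orbT.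
Qed.

(* F_Om right-divides every element of I(Om): the remainder of the division
   lies in I(Om) and is too small to be nonzero. *)
Lemma is_F_Omega_rdivides {Om Fm h} : is_F_Omega sigma delta Om Fm -> inI Om h ->
  rdivides Fm h.
Proof.
move=> [Fmon FI Fmin] hI.
have Fn0 : Fm != 0 by rewrite -lead_coef_eq0 (monicP Fmon) oner_neq0.
have [q [r [e hr]]] := skdiv h Fn0.
exists q; case: (eqVneq r 0) => [r0|rn0]; first by rewrite e r0 addr0.
have rI : inI Om r.
  move=> P hP; have [h1 eh1] := hI P hP; have [f1 ef1] := FI P hP.
  exists (h1 - q ** f1); rewrite skmulBl skmulA -ef1 -eh1 e.
  by rewrite addrAC subrr add0r.
by have := Fmin r rI rn0; rewrite leqNgt hr.
Qed.

Lemma is_F_Omega_normalize {Om H} : H != 0 -> inI Om H ->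
  (forall h, inI Om h -> h != 0 -> (size H <= size h)%N) ->
  is_F_Omega sigma delta Om ((lead_coef H)^-1 *: H) /\
  size ((lead_coef H)^-1 *: H) = size H.
Proof.
move=> Hn0 HI Hmin; set c := (lead_coef H)^-1.
have cn0 : c != 0 by rewrite invr_eq0 lead_coef_eq0.
have sz : size (c *: H) = size H.
  rewrite (polySpred Hn0); apply: size_eqS.
    by rewrite coefZ mul_neq0 // -lead_coefE lead_coef_eq0.
  by move=> j hj; rewrite coefZ nth_default ?mulr0 // (polySpred Hn0).
split=> //; split.
- by apply/monicP; rewrite lead_coefE sz coefZ -lead_coefE mulVr ?unitE ?lead_coef_eq0.
- by rewrite -skmulCl; apply: inI_skmull.
- by move=> h hI hn0; rewrite sz Hmin.
Qed.

(* The (sigma,delta)-conjugate c^b of c by b; sd_conjugate a t means t = a^b, b != 0. *)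
Definition sdconj c b : F := sigma b * c * b^-1 + delta b * b^-1.

Lemma sdconj1 c : sdconj c 1 = c.
Proof. by rewrite /sdconj rmorph1 delta1 invr1 !mulr1 mul1r addr0. Qed.

Lemma sdconj_comp c b e : b != 0 -> e != 0 -> sdconj (sdconj c b) e = sdconj c (e * b).
Proof.
rewrite -!unitE => bu eu; rewrite /sdconj rmorphM deltaM invrM //.
by rewrite !mulrDr !mulrDl !mulrA -addrA mulrK.
Qed.

(* The two coefficient identities behind the swap of linear factors. *)
Lemma sdconj_swapD c d : c != d -> sigma d + sdconj c (c - d) = sigma c + sdconj d (c - d).
Proof.
move=> cd; have bu : (c - d) \is a GRing.unit by rewrite unitE subr_eq0.
rewrite /sdconj; set A := sigma (c - d) * c * _; set B := sigma (c - d) * d * _.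
have -> : A = sigma c - sigma d + B.
  have e0 : A - B = sigma (c - d) by rewrite /A /B -mulrBl -mulrBr mulrK.
  by rewrite -rmorphB -e0 subrK.
by rewrite -!addrA addrCA addNKr.
Qed.

Lemma sdconj_swapM c d : c != d ->
  sdconj c (c - d) * d - delta d = sdconj d (c - d) * c - delta c.
Proof.
move=> cd; have bu : (c - d) \is a GRing.unit by rewrite unitE subr_eq0.
have hd : d = c - (c - d) by rewrite opprB addrC subrK.
move: bu hd; rewrite /sdconj; move: (c - d) => b bu hd; rewrite !mulrDl.
have e1 : sigma b * c * b^-1 * d = sigma b * d * b^-1 * c.
  rewrite -!mulrA; congr (_ * _); rewrite !mulrA hd !mulrBr !mulrBl.
  by rewrite divrK // divrr // mul1r.
have e2 : delta b * b^-1 * d - delta d = delta b * b^-1 * c - delta c.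
  have -> : delta d = delta c - delta b by rewrite hd deltaB.
  by rewrite hd mulrBr divrK // opprB addrA subrK.
by rewrite e1 -!addrA e2.
Qed.

Lemma XsubC_neq0 c : 'X - c%:P != 0.
Proof. by rewrite -size_poly_gt0 size_XsubC. Qed.

Lemma coef_skmul_XsubC c q j : (('X - c%:P) ** q)`_j =
  (if j == 0%N then 0 else sigma q`_j.-1) + delta q`_j - c * q`_j.
Proof. by rewrite skmulBl -[X in X ** q]expr1 skmulXn skmulCl coefB coef_skX coefZ. Qed.

Lemma skmul_XsubC_swap c d : c != d ->
  ('X - (sdconj c (c - d))%:P) ** ('X - d%:P) = ('X - (sdconj d (c - d))%:P) ** ('X - c%:P).
Proof.
move=> cd; apply/polyP => j; rewrite !coef_skmul_XsubC !coefB !coefX !coefC.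
case: j => [|[|[|j]]] /=; rewrite ?subrr ?mulr0 //.
  by rewrite !sub0r !add0r !deltaN !mulrN !opprK addrC sdconj_swapM // addrC.
by rewrite subr0 !mulr1 !sub0r !rmorphN delta1 !addr0 -!opprD sdconj_swapD.
Qed.

Lemma common_multiple_XsubC {c d y z} : c != d -> y ** ('X - d%:P) = z ** ('X - c%:P) ->
  exists al, y = al ** ('X - (sdconj c (c - d))%:P) /\ z = al ** ('X - (sdconj d (c - d))%:P).
Proof.
move=> cd e; have [al [r [ey hr]]] := skdiv y (XsubC_neq0 (sdconj c (c - d))).
have r0 : r = (r`_0)%:P by apply: size1_polyC; move: hr; rewrite size_XsubC.
set rho := r`_0 in r0; set w := z - al ** ('X - (sdconj d (c - d))%:P).
have e2 : rho *: ('X - d%:P) = w ** ('X - c%:P).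
  rewrite /w skmulBl skmulA -skmul_XsubC_swap // -skmulA -e ey r0 skmulDl skmulCl.
  by rewrite addrAC subrr add0r.
have w0 : w = (w`_0)%:P.
  case: (eqVneq w 0) => [->|wn0]; first by rewrite coef0.
  apply: size1_polyC; have := skmul_sizeD wn0 (XsubC_neq0 c).
  rewrite -e2 size_XsubC => h.
  have := size_scale_leq rho ('X - d%:P); rewrite size_XsubC; lia.
(* comparing the coefficients of x and 1 forces rho (d - c) = 0 *)
rewrite w0 skmulCl in e2; set ka := w`_0 in w0 e2.
have c1 := congr1 (fun p => p`_1) e2; have c0 := congr1 (fun p => p`_0) e2.
move: c1 c0; rewrite /= !coefZ !coefB !coefX !coefC /= !subr0 !mulr1 !sub0r !mulrN => c1.
rewrite -c1 => /eqP; rewrite eqr_opp -subr_eq0 -mulrBr => /eqP h0.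
have rho0 : rho = 0.
  apply/eqP; apply: contraT => rn0.
  have dc : d - c != 0 by rewrite subr_eq0 eq_sym.
  by have := mul_neq0 rn0 dc; rewrite h0 eqxx.
exists al; split; first by rewrite ey r0 rho0 addr0.
by apply/eqP; rewrite -subr_eq0 -/w w0 -c1 rho0.
Qed.

(* lin [:: c_1; ...; c_k] is the product (x - c_k) ... (x - c_1). *)
Definition lin (cs : seq F) : {poly F} := foldr (fun c acc => acc ** ('X - c%:P)) 1 cs.

Lemma lin_cat cs ds : lin (cs ++ ds) = lin ds ** lin cs.
Proof. by elim: cs => [|c cs ih] /=; rewrite ?skmul1r // ih skmulA. Qed.

Lemma size_lin cs : size (lin cs) = (size cs).+1.
Proof.
elim: cs => [|c cs ih] /=; first by rewrite size_poly1.
have l0 : lin cs != 0 by rewrite -size_poly_gt0 ih.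
by apply/succn_inj; rewrite skmul_sizeD ?XsubC_neq0 // ih size_XsubC addn2.
Qed.

Lemma lin_neq0 cs : lin cs != 0.
Proof. by rewrite -size_poly_gt0 size_lin. Qed.

Lemma skexp_lin c k : skexp sigma delta ('X - c%:P) k = lin (nseq k c).
Proof. by elim: k => //= k ->. Qed.

Section OneClass.
Variable S : F -> Prop.
Hypothesis S_conj : forall c b, b != 0 -> S c -> S (sdconj c b).

Lemma lin_common_multiple_XsubC {cs d} : {in cs, forall c, S c} -> S d ->
  exists us ws, [/\ {in us, forall c, S c}, {in ws, forall c, S c} &
                    lin us ** lin cs = lin ws ** ('X - d%:P)].
Proof.
elim: cs d => [|c cs ih] d hS Sd.
  exists [:: d], [::]; split => //; first by move=> x; rewrite inE => /eqP ->.
  by rewrite /= skmul1r !skmul1l.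
move/forall_cons: hS => [Sc hS'].
have [<-|cd] := eqVneq c d; first by exists [::], cs; split => //=; rewrite skmul1l.
have dc0 : d - c != 0 by rewrite subr_eq0 eq_sym.
have [us [ws [hus hws e]]] := ih _ hS' (S_conj dc0 Sd).
exists us, (sdconj c (d - c) :: ws); split => //=.
  by apply/forall_cons; split => //; apply: S_conj.
by rewrite -skmulA e skmulA skmul_XsubC_swap 1?eq_sym // -skmulA.
Qed.

Lemma lin_common_multiple {ds cs} : {in ds, forall c, S c} -> {in cs, forall c, S c} ->
  exists us ws, [/\ {in us, forall c, S c}, {in ws, forall c, S c} &
                    lin us ** lin cs = lin ws ** lin ds].
Proof.
elim: ds cs => [|d ds ih] cs hd hc.
  by exists [::], cs; split => //=; rewrite skmul1l skmul1r.
move/forall_cons: hd => [Sd hd'].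
have [u1 [w1 [hu1 hw1 e1]]] := lin_common_multiple_XsubC hc Sd.
have [u2 [w2 [hu2 hw2 e2]]] := ih _ hd' hw1.
exists (u1 ++ u2), w2; split => //.
  by move=> x; rewrite mem_cat => /orP [/hu1|/hu2].
by rewrite lin_cat skmulA e1 -skmulA e2 skmulA.
Qed.

Lemma lin_common_multiple_seq {Ls : seq (seq F)} :
  (forall cs, cs \in Ls -> {in cs, forall c, S c}) ->
  exists E, {in E, forall c, S c} /\ forall cs, cs \in Ls -> rdivides (lin cs) (lin E).
Proof.
elim: Ls => [|cs Ls ih] hL; first by exists [::].
have [E [hE hdiv]] : exists E, {in E, forall c, S c} /\
    forall cs, cs \in Ls -> rdivides (lin cs) (lin E).
  by apply: ih => x hx; apply: hL; rewrite inE hx orbT.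
have [u [w [hu _ e]]] := lin_common_multiple (hL cs (mem_head _ _)) hE.
exists (E ++ u); split.
  by move=> x; rewrite mem_cat => /orP [/hE|/hu].
move=> cs'; rewrite inE => /predU1P [->|/hdiv [h eh]].
  by exists (lin w); rewrite lin_cat e.
by exists (lin u ** h); rewrite lin_cat eh skmulA.
Qed.

End OneClass.

Section TwoClasses.
Variables S T : F -> Prop.
Hypothesis S_conj : forall c b, b != 0 -> S c -> S (sdconj c b).
Hypothesis T_conj : forall c b, b != 0 -> T c -> T (sdconj c b).
Hypothesis ST_disjoint : forall t, S t -> T t -> False.

Lemma lin_peel_factor {cs d y u} : {in cs, forall c, S c} -> T d ->
  y ** ('X - d%:P) = u ** lin cs ->
  exists cs' al, [/\ {in cs', forall c, S c}, size cs' = size cs & y = al ** lin cs'].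
Proof.
elim: cs d y u => [|c cs ih] d y u hS Td e.
  by exists [::], y; rewrite skmul1r.
move/forall_cons: hS => [Sc hS'].
have cd : c != d by apply/eqP => cd; apply: (ST_disjoint Sc); rewrite cd.
have cd0 : c - d != 0 by rewrite subr_eq0.
rewrite /= -skmulA in e.
have [al [ey eu]] := common_multiple_XsubC cd e.
have [cs' [al' [h1 h2 h3]]] := ih _ _ _ hS' (T_conj cd0 Td) (esym eu).
exists (sdconj c (c - d) :: cs'), al'; split => /=.
- by apply/forall_cons; split => //; apply: S_conj.
- by rewrite h2.
- by rewrite ey h3 skmulA.
Qed.

Lemma common_multiple_lin_size {ds cs Z u v} :
  {in ds, forall c, T c} -> {in cs, forall c, S c} -> Z != 0 ->
  Z = u ** lin cs -> Z = v ** lin ds -> (size cs + size ds < size Z)%N.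
Proof.
elim: ds cs Z u v => [|d ds ih] cs Z u v hT hS Zn0 eu ev.
  have un0 : u != 0 by apply: contraNneq Zn0 => u0; rewrite eu u0 skmul0l.
  have := skmul_sizeD un0 (lin_neq0 cs); rewrite -eu size_lin.
  have : (0 < size u)%N by rewrite size_poly_gt0.
  rewrite /= addn0; lia.
move/forall_cons: hT => [Td hT'].
set y := v ** lin ds.
have e : y ** ('X - d%:P) = u ** lin cs by rewrite /y skmulA -eu ev.
have [cs' [al [h1 h2 h3]]] := lin_peel_factor hS Td e.
have yn0 : y != 0 by apply: contraNneq Zn0 => y0; rewrite ev /= -skmulA -/y y0 skmul0l.
have := ih _ _ _ _ hT' h1 yn0 h3 erefl.
have := skmul_sizeD yn0 (XsubC_neq0 d); rewrite e -eu size_XsubC h2 /=.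
lia.
Qed.

Lemma common_multiple_divisors_size {f g csA csB H u v} :
  {in csA, forall c, S c} -> {in csB, forall c, T c} ->
  rdivides f (lin csA) -> rdivides g (lin csB) ->
  H != 0 -> H = u ** f -> H = v ** g -> ((size f + size g).-1 <= size H)%N.
Proof.
move=> hA hB dfA dgB Hn0 eu ev.
have fn0 : f != 0 by apply: contraNneq Hn0 => f0; rewrite eu f0 skmul0r.
have gn0 : g != 0 by apply: contraNneq Hn0 => g0; rewrite ev g0 skmul0r.
have un0 : u != 0 by apply: contraNneq Hn0 => u0; rewrite eu u0 skmul0l.
have vn0 : v != 0 by apply: contraNneq Hn0 => v0; rewrite ev v0 skmul0l.
have [m1 [w1 [m1n0 e1 hm1]]] := skOre_rdivides (lin_neq0 csA) dfA eu Hn0.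
have M1n0 : m1 ** lin csA != 0 by rewrite skmul_neq0 ?lin_neq0.
have w1n0 : w1 != 0 by apply: contraNneq M1n0 => w0; rewrite e1 w0 skmul0l.
have eM : w1 ** H = (w1 ** v) ** g by rewrite ev skmulA.
have M1n0' : w1 ** H != 0 by rewrite -e1.
have [m2 [w2 [m2n0 e2 hm2]]] := skOre_rdivides (lin_neq0 csB) dgB eM M1n0'.
set Z := m2 ** lin csB.
have eZ : Z = (w2 ** m1) ** lin csA by rewrite /Z e2 skmulA e1.
have Zn0 : Z != 0 by rewrite skmul_neq0 ?lin_neq0.
have hZ := common_multiple_lin_size hB hA Zn0 eZ erefl.
(* degree count: deg Z >= |csA| + |csB| forces deg u >= deg g *)
have s1 := skmul_sizeD m2n0 (lin_neq0 csB).
have s2 := skmul_sizeD m1n0 (lin_neq0 csA).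
have s3 := skmul_sizeD w1n0 Hn0.
have s4 := skmul_sizeD w1n0 vn0.
rewrite -/Z size_lin in s1; rewrite e1 size_lin in s2.
have s5 : (size H).+1 = (size u + size f)%N by rewrite eu skmul_sizeD.
have s6 : (size H).+1 = (size v + size g)%N by rewrite ev skmul_sizeD.
have : (0 < size f)%N by rewrite size_poly_gt0.
lia.
Qed.

Lemma lin_neq {cs ds} : {in cs, forall c, S c} -> {in ds, forall c, T c} -> ds != [::] ->
  lin cs != lin ds.
Proof.
move=> hS hT dsn0; apply/eqP => e.
have e1 : lin cs = 1 ** lin cs by rewrite skmul1l.
have e2 : lin cs = 1 ** lin ds by rewrite skmul1l.
have := common_multiple_lin_size hT hS (lin_neq0 cs) e1 e2.
by rewrite size_lin; case: ds dsn0 {hT e e2} => // d ds _ /=; lia.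
Qed.

Lemma uniq_lin_cat (La Lb : seq (seq F)) :
  (forall cs, cs \in La -> {in cs, forall c, S c}) ->
  (forall ds, ds \in Lb -> {in ds, forall c, T c}) ->
  (forall ds, ds \in Lb -> ds != [::]) ->
  uniq (map lin La) -> uniq (map lin Lb) -> uniq (map lin La ++ map lin Lb).
Proof.
move=> hLa hLb hne uOm uPsi; rewrite cat_uniq uOm uPsi andbT.
apply/hasPn => _ /mapP [ds hds ->]; apply/mapP => -[cs hcs e].
by have := lin_neq (hLa _ hcs) (hLb _ hds) (hne _ hds); rewrite e eqxx.
Qed.

Lemma P_independent_cat (La Lb : seq (seq F)) :
  (forall cs, cs \in La -> {in cs, forall c, S c}) ->
  (forall ds, ds \in Lb -> {in ds, forall c, T c}) ->
  uniq (map lin La ++ map lin Lb) ->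
  P_independent sigma delta (map lin La) -> P_independent sigma delta (map lin Lb) ->
  P_independent sigma delta (map lin La ++ map lin Lb).
Proof.
move=> hLa hLb uc [_ [f [Ff fdeg]]] [_ [g [Fg gdeg]]].
set Om := map lin La in uc Ff fdeg *; set Psi := map lin Lb in uc Fg gdeg *.
have [fmon fI _] := Ff; have [gmon gI _] := Fg.
have fn0 : f != 0 by rewrite -lead_coef_eq0 (monicP fmon) oner_neq0.
have gn0 : g != 0 by rewrite -lead_coef_eq0 (monicP gmon) oner_neq0.
(* F_Om and F_Psi divide products of S-factors, resp. T-factors *)
have linI L E : (forall cs, cs \in L -> rdivides (lin cs) (lin E)) -> inI (map lin L) (lin E).
  by move=> hd P /mapP [cs hcs ->]; apply: hd.
have [EA [hEA /linI/(is_F_Omega_rdivides Ff) dfA]] := lin_common_multiple_seq S_conj hLa.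
have [EB [hEB /linI/(is_F_Omega_rdivides Fg) dgB]] := lin_common_multiple_seq T_conj hLb.
(* hence every nonzero element of I(Om ++ Psi) has degree >= deg F_Om + deg F_Psi *)
have lower h : inI (Om ++ Psi) h -> h != 0 -> ((size f + size g).-1 <= size h)%N.
  move=> /inI_cat [hO hP] hn0.
  have [u eu] := is_F_Omega_rdivides Ff hO; have [v ev] := is_F_Omega_rdivides Fg hP.
  exact: common_multiple_divisors_size hEA hEB dfA dgB hn0 eu ev.
(* the Ore common multiple of F_Om and F_Psi attains this bound *)
have [m1 [m2 [m1n0 em hm]]] := skOre fn0 gn0.
set H := m1 ** f.
have Hn0 : H != 0 by rewrite skmul_neq0.
have HI : inI (Om ++ Psi) H by apply/inI_cat; rewrite {2}/H em; split; apply: inI_skmull.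
have sH : size H = (size f + size g).-1.
  apply/eqP; rewrite eqn_leq lower // andbT.
  have := skmul_sizeD m1n0 fn0; rewrite -/H; lia.
have Hmin h : inI (Om ++ Psi) h -> h != 0 -> (size H <= size h)%N.
  by move=> hI hn0; rewrite sH lower.
have [FH sFH] := is_F_Omega_normalize Hn0 HI Hmin.
split; first by exists H.
exists ((lead_coef H)^-1 *: H); split => //.
have := uc; rewrite cat_uniq => /and3P [uOm _ uPsi].
rewrite sFH sH undup_id // big_cat /= -(undup_id uOm) -(undup_id uPsi) -fdeg -gdeg.
by rewrite (polySpred fn0) (polySpred gn0) addSn addnS.
Qed.

End TwoClasses.

Definition conj_classes {k} (e : 'I_k -> F) (t : F) : Prop :=
  exists i, sd_conjugate sigma delta (e i) t.

Lemma conj_classes_closed {k} (e : 'I_k -> F) c b :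
  b != 0 -> conj_classes e c -> conj_classes e (sdconj c b).
Proof.
move=> bn0 [i [be [ben0 ->]]]; exists i, (b * be); split; first exact: mul_neq0.
by rewrite -[RHS]/(sdconj (e i) (b * be)) -sdconj_comp.
Qed.

Lemma conj_classes_mem {k} (e : 'I_k -> F) i : conj_classes e (e i).
Proof. by exists i, 1; rewrite oner_neq0 -[X in _ = X]/(sdconj (e i) 1) sdconj1. Qed.

Lemma conj_classes_disjoint {k l} (e : 'I_k -> F) (e' : 'I_l -> F) :
  (forall i j, ~ sd_conjugate sigma delta (e i) (e' j)) ->
  forall t, conj_classes e t -> conj_classes e' t -> False.
Proof.
move=> nc t [i [be [ben0 e1]]] [j [ga [gan0 e2]]]; apply: (nc i j).
have gi0 : ga^-1 != 0 by rewrite invr_eq0.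
exists (ga^-1 * be); split; first exact: mul_neq0.
change (t = sdconj (e i) be) in e1; change (t = sdconj (e' j) ga) in e2.
change (e' j = sdconj (e i) (ga^-1 * be)).
by rewrite -sdconj_comp // -e1 e2 sdconj_comp // mulVr ?sdconj1 // unitE.
Qed.

End SkewPolynomials.

Theorem mainTheorem7 (F : unitRingType) (sigma : {rmorphism F -> F}) (delta : F -> F)
  (n m : nat) (a : 'I_n -> F) (r : 'I_n -> nat) (b : 'I_m -> F) (s : 'I_m -> nat) :
  division_ring F ->
  sigma_derivation sigma delta ->
  (0 < n)%N -> (0 < m)%N ->
  (forall i, 0 < r i)%N -> (forall j, 0 < s j)%N ->
  let Om := [seq skexp sigma delta ('X - (a i)%:P) (r i) | i <- enum 'I_n] in
  let Psi := [seq skexp sigma delta ('X - (b j)%:P) (s j) | j <- enum 'I_m] in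
  uniq Om -> P_independent sigma delta Om ->
  uniq Psi -> P_independent sigma delta Psi ->
  (forall i j, ~ sd_conjugate sigma delta (a i) (b j)) ->
  size (undup (Om ++ Psi)) = (n + m)%N /\ P_independent sigma delta (Om ++ Psi).
Proof.
move=> divF sdF _ _ _ s_pos Om Psi uOm POm uPsi PPsi no_conj.
pose factors k (e : 'I_k -> F) (p : 'I_k -> nat) := [seq nseq (p i) (e i) | i <- enum 'I_k].
have eOm : Om = map (lin sigma delta) (factors n a r).
  by rewrite -map_comp; apply: eq_map => i; apply: skexp_lin.
have ePsi : Psi = map (lin sigma delta) (factors m b s).
  by rewrite -map_comp; apply: eq_map => j; apply: skexp_lin.
have in_classes k e p : forall cs, cs \in factors k e p ->
    {in cs, forall c, conj_classes sigma delta e c}.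
  by move=> _ /mapP [i _ ->] c; rewrite mem_nseq => /andP [_ /eqP ->]; apply: conj_classes_mem.
(* s_j > 0 makes the elements of Psi genuine products, distinct from those of Om *)
have nonempty ds : ds \in factors m b s -> ds != [::].
  by move=> /mapP [j _ ->]; rewrite -size_eq0 size_nseq -lt0n s_pos.
rewrite eOm ePsi in uOm POm uPsi PPsi *.
have S_conj := conj_classes_closed divF sdF (e := a).
have T_conj := conj_classes_closed divF sdF (e := b).
have ST_disjoint := conj_classes_disjoint divF sdF no_conj.
have uc := uniq_lin_cat divF sdF S_conj T_conj ST_disjoint
  (in_classes _ a r) (in_classes _ b s) nonempty uOm uPsi.
split; first by rewrite undup_id // size_cat /factors !size_map -!enumT !size_enum_ord.
exact: (P_independent_cat divF sdF S_conj T_conj ST_disjoint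
  (in_classes _ a r) (in_classes _ b s) uc POm PPsi).
Qed.
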